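(* In the setting below, the minimum distance $d$ of $\mathrm{UB}(a,\ell)$ satisfies $$d\le\min\{\mathrm{wt}(a)^{\ell}+1,\ \mathrm{wt}(h)\}.$$
   Context: Setting. Let $n\ge 2$ and $\mathcal R_n=\mathbb F_2[x]/(x^n-1)$. Identifications and weights. Vectors in $\mathbb F_2^n$ are identified with elements of $\mathcal R_n$ via $c\mapsto\sum_ic_ix^i$. $\mathrm{wt}(g)$ is the number of nonzero coefficients of the degree-$<n$ representative of $g$. $\mathrm{Circ}(g)$ is the $n\times n$ binary matrix whose $i$-th row is the coefficient vector of $x^ig(x)$. Code data. Let $a(x)\in\mathbb F_2[x]$ with $a\mid x^n-1$ and $1\le r:=\deg a<n$. Let $\ell\ge1$, $t=2^\ell$, $b=a^t\in\mathcal R_n$, and $h=(x^n-1)/a\in\mathbb F_2[x]$. The univariate bicycle code $\mathrm{UB}(a,\ell)$ is the CSS code on $2n$ qubits with $H_X=[\mathrm{Circ}(a),\mathrm{Circ}(b)]$ and $H_Z=[\mathrm{Circ}(b)^{\mathsf T},\mathrm{Circ}(a)^{\mathsf T}]$. Distances. With $\ker(H)=\{c:Hc^{\mathsf T}=0\}$ and $\mathrm{rs}$ the row space, define $d_Z=\min\{\mathrm{wt}(v):v\in\ker(H_Z)\setminus\mathrm{rs}(H_X)\}$, define $d_X=\min\{\mathrm{wt}(v):v\in\ker(H_X)\setminus\mathrm{rs}(H_Z)\}$, and set $d=\min(d_X,d_Z)$. Here the weight of a vector in $\mathbb F_2^{2n}$ is its number of nonzero entries. *)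

From HB Require Import structures.
From mathcomp Require Import all_boot all_order all_algebra.
Set Implicit Arguments. Unset Strict Implicit. Unset Printing Implicit Defensive.
Import GRing.Theory.
Local Open Scope ring_scope.

(* Polynomials over F_2; R_n = F_2[x]/(x^n - 1) is handled through the
   degree-< n representative  g %% ('X^n - 1). *)
Notation F2poly := {poly 'F_2}.

Definition modn_poly (n : nat) (g : F2poly) : F2poly := g %% ('X^n - 1).

Definition pwt (n : nat) (g : F2poly) : nat :=
  #|[set j : 'I_n | (modn_poly n g)`_j != 0]|.

Definition Circ (n : nat) (g : F2poly) : 'M['F_2]_n :=
  \matrix_(i < n, j < n) (modn_poly n ('X^i * g))`_j.

Definition vwt (m : nat) (v : 'rV['F_2]_m) : nat := #|[set j : 'I_m | v 0 j != 0]|.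

Definition UB_b (n : nat) (a : F2poly) (l : nat) : F2poly :=
  modn_poly n (a ^+ (2 ^ l)).

Definition UB_HX (n : nat) (a : F2poly) (l : nat) : 'M['F_2]_(n, n + n) :=
  row_mx (Circ n a) (Circ n (UB_b n a l)).

Definition UB_HZ (n : nat) (a : F2poly) (l : nat) : 'M['F_2]_(n, n + n) :=
  row_mx (Circ n (UB_b n a l))^T (Circ n a)^T.

(* min { wt v : v in ker(H1) \ rs(H2) }.  The default value (2n+1 for length
   2n) exceeds every possible weight, so it plays the role of +infinity
   (minimum of the empty set). *)
Definition css_dist (m k : nat) (H1 H2 : 'M['F_2]_(k, m)) : nat :=
  \big[minn/m.+1]_(v : 'rV['F_2]_m | (H1 *m v^T == 0) && ~~ (v <= H2)%MS) vwt v.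

Definition UB_dZ (n : nat) (a : F2poly) (l : nat) : nat :=
  css_dist (UB_HZ n a l) (UB_HX n a l).
Definition UB_dX (n : nat) (a : F2poly) (l : nat) : nat :=
  css_dist (UB_HX n a l) (UB_HZ n a l).
Definition UB_d (n : nat) (a : F2poly) (l : nat) : nat :=
  minn (UB_dX n a l) (UB_dZ n a l).

From HB Require Import structures.
From mathcomp Require Import all_boot all_order all_algebra.
From mathcomp Require Import zify.
Import Order.TTheory GRing.Theory.
Local Open Scope ring_scope.

(** Both bounds come from explicit Z-logical operators, written as pairs of
    polynomials (p, q) in R_n.  The pair (p, q) is in ker H_Z exactly when
    p b + q a = 0, and it lies in rs(H_X) exactly when (p, q) = (f a, f b)
    for some f.  The pair (1, a^(t-1)) is in the kernel because b = a^t and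
    we are in characteristic 2; it is no stabilizer since 1 = f a would make
    the non-constant divisor a of x^n - 1 a unit.  Writing t - 1 as
    1 + 2 + ... + 2^(l-1) and using that squaring is additive, hence never
    increases weight, its weight is at most 1 + wt(a)^l.  The pair (0, h) is
    in the kernel since h a = x^n - 1, and is no stabilizer since f a = 0
    forces f b = 0 while h is a nonzero polynomial of degree < n. *)

Lemma F2_neq0_eq1 (c : 'F_2) : c != 0 -> c = 1.
Proof. by case: c => [[|[|m]]] //= ? _; apply: val_inj. Qed.

Lemma pchar2_polyF2 : (2 \in [pchar {poly 'F_2}])%N.
Proof. by rewrite pchar_poly pchar_Fp. Qed.

Lemma css_dist_le (m k : nat) (H1 H2 : 'M['F_2]_(k, m)) v :
  H1 *m v^T == 0 -> ~~ (v <= H2)%MS -> (css_dist H1 H2 <= vwt v)%N.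
Proof.
move=> h1 h2; rewrite /css_dist -minEnat.
by apply: (@bigmin_le_cond _ nat _ m.+1 v); rewrite h1.
Qed.

Section CyclicReduction.

Variable n : nat.
Hypothesis n_gt0 : (0 < n)%N.
Local Notation M := ('X^n - 1 : {poly 'F_2}).
Implicit Types p q f g : {poly 'F_2}.

Lemma size_Xn_sub1 : size M = n.+1.
Proof. exact: size_XnsubC. Qed.

Lemma Xn_sub1_neq0 : M != 0.
Proof. by rewrite -size_poly_eq0 size_Xn_sub1. Qed.

Lemma size_modn_poly p : (size (modn_poly n p) <= n)%N.
Proof. by have := ltn_modp p M; rewrite Xn_sub1_neq0 size_Xn_sub1. Qed.

Lemma modn_poly_small p : (size p <= n)%N -> modn_poly n p = p.
Proof. by move=> sp; rewrite /modn_poly modp_small // size_Xn_sub1. Qed.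

Lemma modn_poly_id p : modn_poly n (modn_poly n p) = modn_poly n p.
Proof. exact: modp_id. Qed.

Lemma modn_polyMmod p q :
  modn_poly n (modn_poly n p * modn_poly n q) = modn_poly n (p * q).
Proof. by rewrite /modn_poly modp_mul mulrC modp_mul mulrC. Qed.

Lemma modn_poly_sum (I : Type) (r : seq I) (P : pred I) (F : I -> {poly 'F_2}) :
  modn_poly n (\sum_(i <- r | P i) F i) = \sum_(i <- r | P i) modn_poly n (F i).
Proof. exact: (big_morph _ (fun p q => modpD M p q) (mod0p M)). Qed.

Lemma modn_poly_eq0 p : (modn_poly n p == 0) = (M %| p).
Proof. exact/eqP/modp_eq0P. Qed.

Lemma modn_poly_Xn k : modn_poly n 'X^k = 'X^(k %% n).
Proof.
rewrite /modn_poly {1}(divn_eq k n); elim: (k %/ n)%N => [|q IH].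
  by rewrite add0n modp_small // size_polyXn size_Xn_sub1 ltnS ltn_pmod.
have XnM : 'X^n * 'X^(k %% n) = 'X^(k %% n) * M + 'X^(k %% n) :> {poly 'F_2}.
  by rewrite mulrC mulrBr mulr1 subrK.
rewrite mulSn -addnA exprD -modp_mul IH XnM modp_addl_mul_small //.
by rewrite size_polyXn size_Xn_sub1 ltnS ltn_pmod.
Qed.

Definition psupp p := [set j : 'I_n | (modn_poly n p)`_j != 0].

Lemma pwtE p : pwt n p = #|psupp p|.
Proof. by []. Qed.

Lemma modn_poly_supp p : modn_poly n p = \sum_(j in psupp p) 'X^j.
Proof.
have -> : modn_poly n p = \sum_(j < n) (modn_poly n p)`_j *: 'X^j.
  rewrite -poly_def; apply/polyP => k; rewrite coef_poly; case: ltnP => // nk.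
  exact/nth_default/(leq_trans (size_modn_poly p)).
rewrite [RHS]big_mkcond; apply: eq_bigr => j _; rewrite inE.
by case: eqP => [->|/eqP /F2_neq0_eq1 ->]; rewrite ?scale0r ?scale1r.
Qed.

Lemma pwt_modn_poly p : pwt n (modn_poly n p) = pwt n p.
Proof. by rewrite /pwt modn_poly_id. Qed.

Lemma pwt_sumXn_le (I : finType) (A : {set I}) (f : I -> nat) :
  (pwt n (\sum_(i in A) 'X^(f i)) <= #|A|)%N.
Proof.
pose g i : 'I_n := Ordinal (ltn_pmod (f i) n_gt0).
apply: leq_trans (leq_imset_card g A); apply: subset_leq_card.
apply/subsetP => j; rewrite !inE modn_poly_sum; under eq_bigr do rewrite modn_poly_Xn.
apply: contraR => jNg; rewrite coef_sum big1 // => i iA.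
rewrite coefXn; case: eqP => // ej; case/negP: jNg.
by apply/imsetP; exists i => //; apply: val_inj.
Qed.

Lemma pwt0 : pwt n 0 = 0%N.
Proof.
apply/eqP; rewrite cards_eq0; apply/eqP/setP => j.
by rewrite !inE /modn_poly mod0p coef0 eqxx.
Qed.

Lemma pwt1_le : (pwt n 1 <= 1)%N.
Proof.
have -> : (1 : {poly 'F_2}) = \sum_(i in [set ord0 : 'I_1]) 'X^0.
  by rewrite big_set1 expr0.
by apply: leq_trans (pwt_sumXn_le _ _ _) _; rewrite cards1.
Qed.

Lemma pwtM_le p q : (pwt n (p * q) <= pwt n p * pwt n q)%N.
Proof.
rewrite -pwt_modn_poly -modn_polyMmod pwt_modn_poly.
rewrite (modn_poly_supp p) (modn_poly_supp q) big_distrlr /=.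
under eq_bigr do under eq_bigr do rewrite -exprD.
rewrite pair_big_dep /= (eq_bigl (fun u => u \in setX (psupp p) (psupp q))).
  by rewrite !pwtE -cardsX; exact: pwt_sumXn_le.
by move=> [i j]; rewrite in_setX.
Qed.

(** Squaring is the Frobenius map, so it sends a sum of monomials to a sum of
    as many monomials. *)
Lemma pwt_sqr_le p : (pwt n (p ^+ 2) <= pwt n p)%N.
Proof.
rewrite expr2 -pwt_modn_poly -modn_polyMmod -expr2 pwt_modn_poly modn_poly_supp.
rewrite -(pFrobenius_autE pchar2_polyF2) rmorph_sum /=.
under eq_bigr do rewrite pFrobenius_autE -exprM.
exact: pwt_sumXn_le.
Qed.

Lemma pwt_exp2_pred_le a l : (pwt n (a ^+ (2 ^ l - 1)) <= pwt n a ^ l)%N.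
Proof.
elim: l => [|l IH]; first by rewrite subnn expr0 pwt1_le.
have -> : (2 ^ l.+1 - 1 = 1 + (2 ^ l - 1) * 2)%N.
  by rewrite expnS; have := expn_gt0 2 l; lia.
rewrite exprD exprM expr1 expnS; apply: leq_trans (pwtM_le _ _) _.
by rewrite leq_mul2l (leq_trans (pwt_sqr_le _) IH) orbT.
Qed.

Definition rVmodn p : 'rV['F_2]_n := poly_rV (modn_poly n p).

Lemma vwt_rVmodn p : vwt (rVmodn p) = pwt n p.
Proof. by apply: eq_card => j; rewrite !inE mxE. Qed.

Lemma rVpolyK_modn (D : 'rV['F_2]_n) : rVmodn (rVpoly D) = D.
Proof. by rewrite /rVmodn modn_poly_small ?rVpolyK ?size_poly. Qed.

Lemma rVmodn_eq p q : (rVmodn p == rVmodn q) = (M %| p - q).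
Proof.
rewrite -modn_poly_eq0 /modn_poly modpD modpN subr_eq0 /rVmodn.
apply/eqP/eqP => [/(congr1 rVpoly)|e]; last by rewrite /modn_poly e.
by rewrite !poly_rV_K ?size_modn_poly.
Qed.

Lemma rVmodn_eq0 p : (rVmodn p == 0) = (M %| p).
Proof.
have -> : 0 = rVmodn 0 by rewrite /rVmodn /modn_poly mod0p linear0.
by rewrite rVmodn_eq subr0.
Qed.

Lemma rVmodn_mulCirc p g : rVmodn p *m Circ n g = rVmodn (p * g).
Proof.
apply/rowP => j; rewrite !mxE; under eq_bigr do rewrite !mxE.
have -> : modn_poly n (p * g) = modn_poly n (\sum_(i in psupp p) 'X^i * g).
  by rewrite -mulr_suml -modn_poly_supp /modn_poly [in RHS]mulrC modp_mul mulrC.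
rewrite modn_poly_sum coef_sum [RHS]big_mkcond /=; apply: eq_bigr => i _.
by rewrite inE; case: eqP => [->|/eqP /F2_neq0_eq1 ->]; rewrite ?mul0r ?mul1r.
Qed.

Lemma Circ_modn_poly g : Circ n (modn_poly n g) = Circ n g.
Proof. by apply/matrixP => i j; rewrite !mxE /modn_poly modp_mul. Qed.

Lemma vwt_row_rVmodn p q :
  vwt (row_mx (rVmodn p) (rVmodn q)) = (pwt n p + pwt n q)%N.
Proof.
rewrite /vwt -!sum1_card big_split_ord -!vwt_rVmodn /vwt -!sum1_card.
by congr (_ + _)%N; apply: eq_bigl => i; rewrite !inE ?row_mxEl ?row_mxEr.
Qed.

Section UnivariateBicycle.

Variables (a : {poly 'F_2}) (l : nat).
Local Notation t := (2 ^ l)%N.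

Lemma UB_HZ_kerE p q :
  (UB_HZ n a l *m (row_mx (rVmodn p) (rVmodn q))^T == 0) =
  (M %| p * a ^+ t + q * a).
Proof.
rewrite /UB_HZ /UB_b tr_row_mx mul_row_col -!trmx_mul -linearD trmx_eq0.
by rewrite Circ_modn_poly !rVmodn_mulCirc -rVmodn_eq0 /rVmodn /modn_poly modpD linearD.
Qed.

Lemma sub_UB_HX_rowspace p q :
  (row_mx (rVmodn p) (rVmodn q) <= UB_HX n a l)%MS ->
  exists f, (M %| p - f * a) && (M %| q - f * a ^+ t).
Proof.
case/submxP => D; rewrite /UB_HX /UB_b mul_mx_row Circ_modn_poly.
move=> /eq_row_mx [Ep Eq]; exists (rVpoly D).
by rewrite -!rVmodn_eq -!rVmodn_mulCirc rVpolyK_modn Ep Eq !eqxx.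
Qed.

Lemma UB_dZ_le_logical p q :
  M %| p * a ^+ t + q * a ->
  (forall f, M %| p - f * a -> ~~ (M %| q - f * a ^+ t)) ->
  (UB_dZ n a l <= pwt n p + pwt n q)%N.
Proof.
move=> ker notHX; rewrite -vwt_row_rVmodn; apply: css_dist_le.
  by rewrite UB_HZ_kerE.
by apply/negP => /sub_UB_HX_rowspace [f /andP [/notHX /negP]].
Qed.

Hypothesis a_dvd : a %| M.
Hypothesis a_nonconst : (1 < size a)%N.

Lemma UB_dZ_le_pwt_exp : (UB_dZ n a l <= (pwt n a ^ l).+1)%N.
Proof.
have t_gt0 : (0 < t)%N by rewrite expn_gt0.
apply: leq_trans (UB_dZ_le_logical 1 (a ^+ (t - 1)) _ _) _.
- by rewrite mul1r -exprSr subn1 prednK // addrr_pchar2 ?pchar2_polyF2 ?dvdp0.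
- move=> f /(dvdp_trans a_dvd); rewrite dvdp_subl ?dvdp_mull // dvdp1.
  by rewrite (gtn_eqF a_nonconst).
- by rewrite -[(_ ^ l).+1]add1n leq_add ?pwt1_le ?pwt_exp2_pred_le.
Qed.

Lemma UB_dZ_le_pwt_check : (UB_dZ n a l <= pwt n (M %/ a))%N.
Proof.
have hM : M %/ a * a = M by exact: divpK.
have h_neq0 : M %/ a != 0.
  by apply: contra_neq Xn_sub1_neq0 => h0; rewrite -hM h0 mul0r.
apply: leq_trans (UB_dZ_le_logical 0 (M %/ a) _ _) _; last by rewrite pwt0.
- by rewrite mul0r add0r hM.
- move=> f; rewrite sub0r dvdpNr => Mfa.
  have Mfat : M %| f * a ^+ t.
    by rewrite -(prednK (expn_gt0 2 l)) exprS mulrA dvdp_mulr.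
  rewrite dvdp_subl //; apply/negP => /(dvdp_leq h_neq0).
  rewrite size_divp ?size_Xn_sub1 -?size_poly_eq0; last by case: (size a) a_nonconst.
  by case: (size a) a_nonconst => // s; lia.
Qed.

End UnivariateBicycle.
End CyclicReduction.

Theorem corollary2 (n : nat) (a : {poly 'F_2}) (l : nat) :
  (2 <= n)%N ->
  a %| 'X^n - 1 ->
  (1 <= (size a).-1)%N -> ((size a).-1 < n)%N ->
  (1 <= l)%N ->
  (UB_d n a l <= minn ((pwt n a) ^ l).+1 (pwt n (('X^n - 1) %/ a)))%N.
Proof.
move=> n_ge2 a_dvd deg_a_gt0 _ _.
have n_gt0 : (0 < n)%N by apply: leq_trans n_ge2.
have a_nonconst : (1 < size a)%N by move: deg_a_gt0; case: (size a).
apply: leq_trans (geq_minr _ _) _; rewrite leq_min.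
by rewrite UB_dZ_le_pwt_exp ?UB_dZ_le_pwt_check.
Qed.
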